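(* Assume $|V|\ge2$ and let $a\in\mathbb{R}$. If $\underline\kappa(x,y)\ge a$ for all $x,y\in V$ with $x\sim y$ and $x\ne y$, then $\underline\kappa(x,y)\ge a$ for all $x,y\in V$ with $x\ne y$. In particular $\inf_{x\sim y,\,x\ne y}\underline\kappa(x,y)=\inf_{x\ne y}\underline\kappa(x,y)$.
   Context: Let $H=(V,E,w)$ be a weighted hypergraph: $V$ is a finite set, $E$ a set of nonempty subsets of $V$, $w\colon E\to\mathbb{R}_{>0}$. Write $x\sim y$ if some $e\in E$ contains both; $H$ is assumed connected. The degree is $d_x=\sum_{e\ni x}w_e>0$, $D=\mathrm{diag}(d_x)$. The distance $d(x,y)$ is the minimal $n$ with a chain $x=z_0\sim\cdots\sim z_n=y$. $\delta_x$ is the indicator of $x$. $\mathbb{R}^V$ carries the inner product $\langle f,g\rangle=\sum_x f(x)g(x)/d_x$ with norm $\|\cdot\|$. For $e\in E$ let $B_e=\mathrm{Conv}\{\delta_x-\delta_y : x,y\in e\}$. The multivalued hypergraph Laplacian is $L(f)=\{\sum_{e}w_e\mathtt{b}_e(\mathtt{b}_e^\top f) : \mathtt{b}_e\in\operatorname{argmax}_{\mathtt b\in B_e}\mathtt b^\top f\}$ and the normalized Laplacian is $\mathcal{L}f=L(D^{-1}f)$, a maximal monotone operator on $(\mathbb{R}^V,\langle\cdot,\cdot\rangle)$. For $\lambda>0$ the resolvent $J_\lambda=(I+\lambda\mathcal L)^{-1}$ is a single-valued map $\mathbb{R}^V\to\mathbb{R}^V$ (equivalently $J_\lambda f=\operatorname{argmin}_g\{\frac{1}{2\lambda}\|f-g\|^2+Q(D^{-1}g)\}$,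 $Q(g)=\frac12\sum_e w_e\max_{x,y\in e}(g(x)-g(y))^2$). A function $f$ is weighted $1$-Lipschitz if $|f(x)/d_x-f(y)/d_y|\le d(x,y)$ for all $x,y$; $\mathrm{Lip}^1_w(V)$ denotes the set of such functions. $\mathrm{KD}_\lambda(x,y)=\sup\{\langle J_\lambda f,\delta_x-\delta_y\rangle : f\in\mathrm{Lip}^1_w(V)\}$. For $x\ne y$: $\kappa_\lambda(x,y)=1-\mathrm{KD}_\lambda(x,y)/d(x,y)$ and $\underline\kappa(x,y)=\liminf_{\lambda\downarrow0}\kappa_\lambda(x,y)/\lambda$. *)

From HB Require Import structures.
From mathcomp Require Import all_boot all_order all_algebra.
From mathcomp Require Import all_classical all_reals all_analysis.
From Stdlib Require Import ClassicalEpsilon.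
Set Implicit Arguments. Unset Strict Implicit. Unset Printing Implicit Defensive.
Import Order.TTheory GRing.Theory Num.Theory.
Import numFieldTopology.Exports.
Local Open Scope ring_scope.

Section Hypergraph.
Variables (R : realType) (V : finType) (E : {set {set V}}) (w : {set V} -> R).

Definition hadj (x y : V) : bool := [exists e in E, (x \in e) && (y \in e)].

Fixpoint hchain (n : nat) (x y : V) : bool :=
  match n with
  | 0 => x == y
  | n'.+1 => [exists z, hadj x z && hchain n' z y]
  end.

Definition hconnected : Prop := forall x y : V, exists n, hchain n x y.

(* combinatorial distance: minimal length of a chain (0 if none exists) *)
Definition hdist (x y : V) : nat :=
  match pselect (exists n, hchain n x y) with
  | left h => ex_minn h
  | right _ => 0%N
  end.

Definition hdeg (x : V) : R := \sum_(e in E | x \in e) w e.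

Definition winner (f g : V -> R) : R := \sum_x f x * g x / hdeg x.

Definition delta (x : V) : V -> R := fun z => if z == x then 1 else 0.

Definition dotp (f g : V -> R) : R := \sum_x f x * g x.

(* B_e = Conv { delta_x - delta_y : x, y in e } *)
Definition Bset (e : {set V}) : set (V -> R) :=
  [set b | exists c : V * V -> R,
      (forall p, 0 <= c p) /\
      (forall p, c p != 0 -> (p.1 \in e) && (p.2 \in e)) /\
      \sum_p c p = 1 /\
      b = (fun z => \sum_p c p * (delta p.1 z - delta p.2 z))].

Definition argmaxB (e : {set V}) (f : V -> R) : set (V -> R) :=
  [set b | Bset e b /\ forall b', Bset e b' -> dotp b' f <= dotp b f].

Definition hLap (f : V -> R) : set (V -> R) :=
  [set u | exists b : {set V} -> V -> R,
      (forall e, e \in E -> argmaxB e f (b e)) /\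
      u = (fun z => \sum_(e in E) w e * b e z * dotp (b e) f)].

Definition nLap (f : V -> R) : set (V -> R) := hLap (fun z => f z / hdeg z).

(* resolvent relation: g = J_lambda f  iff  f in g + lambda calL g *)
Definition resolvent_rel (l : R) (f g : V -> R) : Prop :=
  exists u, nLap g u /\ f = (fun z => g z + l * u z).

Definition Jres (l : R) (f : V -> R) : V -> R :=
  epsilon (inhabits (fun _ : V => 0 : R)) (resolvent_rel l f).

Definition wLip1 (f : V -> R) : Prop :=
  forall x y, `|f x / hdeg x - f y / hdeg y| <= (hdist x y)%:R.

Local Open Scope ereal_scope.

Definition KD (l : R) (x y : V) : \bar R :=
  ereal_sup [set (winner (Jres l f) (fun z => delta x z - delta y z))%:E
            | f in wLip1].

Definition kappa (l : R) (x y : V) : \bar R :=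
  1 - KD l x y * ((hdist x y)%:R^-1)%:E.

Definition kappa_low (x y : V) : \bar R :=
  limf_einf (fun l : R => kappa l x y * (l^-1)%:E) ((0%R : R)^'+).

End Hypergraph.

From HB Require Import structures.
From mathcomp Require Import all_boot all_order all_algebra.
From mathcomp Require Import all_classical all_reals all_analysis.
From mathcomp Require Import lra.
Import Order.TTheory GRing.Theory Num.Theory.
Import numFieldTopology.Exports.
Local Open Scope ring_scope.

(* The proof only uses two properties of the transport distance KD_l:
   KD_l(y,y) <= 0 and the triangle inequality KD_l(x,y) <= KD_l(x,z) + KD_l(z,y),
   both immediate from the linearity of f |-> <J_l f, delta_x - delta_y>.
   Fix b < a.  If kappa_low >= a on adjacent pairs, then for every adjacent
   pair (at distance 1) eventually as l -> 0+ we have KD_l <= 1 - b l.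
   Walking along a geodesic x = z_0 ~ ... ~ z_n = y and summing these bounds
   gives, eventually, KD_l(x,y) <= n (1 - b l), i.e. kappa_l(x,y)/l >= b,
   hence kappa_low(x,y) >= b; letting b increase to a gives the claim.
   The equality of infima follows by applying this to every real lower bound. *)

Section LiminfFacts.
Context {R : realType} {T : choiceType} {X : filteredType T}.
Local Open Scope classical_set_scope.
Local Open Scope ereal_scope.

Lemma le_limf_einf (F : set_system X) (f : X -> \bar R) (b : \bar R) :
  (\forall l \near F, b <= f l) -> b <= limf_einf f F.
Proof.
move=> hF; rewrite limf_einfE.
apply: (@le_trans _ _ (ereal_inf (f @` [set l : X | b <= f l]))).
  by apply: le_ereal_inf_tmp => _ [l hl <-].
by apply: ereal_sup_ubound; exists [set l : X | b <= f l].
Qed.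

Lemma lt_limf_einf (F : set_system X) {FF : Filter F} (f : X -> \bar R)
    (b : \bar R) :
  b < limf_einf f F -> \forall l \near F, b < f l.
Proof.
rewrite limf_einfE => /ereal_sup_gt[_ [S FS <-] hb].
apply: filterS FS => l Sl; apply: lt_le_trans hb _.
by apply: ereal_inf_lbound; exists l.
Qed.

End LiminfFacts.

Section ExtendedRealBounds.
Variable R : realType.
Local Open Scope ereal_scope.

Lemma le_ereal_real_lbounds (m y : \bar R) :
  (forall a : R, a%:E <= m -> a%:E <= y) -> m <= y.
Proof.
case: m => [r||] h; last by rewrite leNye.
- exact: h.
- case: y h => [r||] h //.
  + by have := h (r + 1)%R (leey _); rewrite lee_fin => ?; exfalso; lra.
  + by have := h 0%R (leey _).
Qed.

End ExtendedRealBounds.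

Section Distance.
Context {V : finType} {E : {set {set V}}}.
Hypothesis hconn : hconnected E.

Lemma hdist_spec x y : hchain E (hdist E x y) x y /\
  forall m, hchain E m x y -> (hdist E x y <= m)%N.
Proof.
rewrite /hdist; case: pselect => [h|/(_ (hconn x y))//].
by case: ex_minnP => n hn hmin; split=> // m; apply: hmin.
Qed.

Lemma hdist_eq0 x y : hdist E x y = 0%N -> x = y.
Proof. by have [h _] := hdist_spec x y => e; rewrite e /= in h; apply/eqP. Qed.

Lemma hdist_gt0 {x y} : x != y -> (0 < hdist E x y)%N.
Proof. by move=> xy; rewrite lt0n; apply: contra xy => /eqP/hdist_eq0->. Qed.

Lemma hdist_step x y n : hdist E x y = n.+1 ->
  exists z, [/\ hadj E x z, x != z, hdist E x z = 1%N & hdist E z y = n].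
Proof.
have [h hmin] := hdist_spec x y => e; rewrite e /= in h.
case/existsP: h => z /andP[axz hzy]; exists z.
have xz : x != z.
  by apply/eqP => exz; subst z; have := hmin _ hzy; rewrite e ltnn.
split=> //.
- have [_ hmin1] := hdist_spec x z; apply/eqP; rewrite eqn_leq hdist_gt0 // andbT.
  by apply: hmin1 => /=; apply/existsP; exists z; rewrite axz eqxx.
- have [hz hminz] := hdist_spec z y; apply/eqP; rewrite eqn_leq hminz //=.
  have xy_chain : hchain E (hdist E z y).+1 x y.
    by apply/existsP; exists z; rewrite axz.
  by have := hmin _ xy_chain; rewrite e ltnS.
Qed.

End Distance.

Section TransportDistance.
Context {R : realType} {V : finType} {E : {set {set V}}} {w : {set V} -> R}.
Local Open Scope ereal_scope.

Lemma KD_diag l y : KD E w l y y <= 0.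
Proof.
apply: ge_ereal_sup => _ [f _ <-].
by rewrite /winner big1 // => i _; rewrite subrr mulr0 mul0r.
Qed.

(* Triangle inequality: delta_x - delta_y = (delta_x - delta_z) + (delta_z - delta_y). *)
Lemma KD_triangle l x y z : KD E w l x y <= KD E w l x z + KD E w l z y.
Proof.
apply: ge_ereal_sup => _ [f hf <-].
set g := Jres E w l f.
have -> : winner E w g (fun u => delta R x u - delta R y u)%R =
  (winner E w g (fun u => delta R x u - delta R z u) +
   winner E w g (fun u => delta R z u - delta R y u))%R.
  rewrite /winner -big_split; apply: eq_bigr => i _ /=.
  by rewrite -mulrDl -mulrDr addrA subrK.
by rewrite EFinD; apply: leeD; apply: ereal_sup_ubound; exists f.
Qed.

End TransportDistance.

Section CurvatureBounds.
Variables (R : realType) (V : finType) (E : {set {set V}}) (w : {set V} -> R).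
Local Open Scope classical_set_scope.
Local Open Scope ereal_scope.

Lemma KD_edge_bound {a b : R} {x z : V} : (b < a)%R -> hdist E x z = 1%N ->
  a%:E <= kappa_low E w x z ->
  \forall l \near (0:R)^'+, KD E w l x z <= (1 - b * l)%:E.
Proof.
move=> ba d1 ha.
have hlt : b%:E < kappa_low E w x z by apply: lt_le_trans ha; rewrite lte_fin.
have ev : \forall l \near (0:R)^'+, b%:E < kappa E w l x z * (l^-1)%:E.
  exact: lt_limf_einf hlt.
apply: filterS (filterI ev (nbhs_right_gt 0)) => l [hl l0].
move: hl; rewrite /kappa d1 invr1 mule1.
case: (KD E w l x z) => [r||] //=; last by rewrite leNye.
- by rewrite -EFinD -EFinM lte_fin lee_fin ltr_pdivlMr //; lra.
- by rewrite addeNy gt0_mulNye // lte_fin invr_gt0.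
Qed.

Lemma kappa_ratio_bound {b l : R} {x y : V} : (0 < l)%R -> (0 < hdist E x y)%N ->
  KD E w l x y <= ((hdist E x y)%:R * (1 - b * l))%:E ->
  b%:E <= kappa E w l x y * (l^-1)%:E.
Proof.
rewrite /kappa; move: (hdist E x y) => n l0 n0.
have nR : (0 < n%:R :> R)%R by rewrite ltr0n.
case: (KD E w l x y) => [r||] //=.
- rewrite lee_fin -EFinD -EFinM lee_fin => hr.
  have : (r / n%:R <= 1 - b * l)%R by rewrite ler_pdivrMr // mulrC.
  by rewrite ler_pdivlMr //; lra.
- move=> _; rewrite gt0_mulNye ?lte_fin ?invr_gt0 //.
  by rewrite /= addey // gt0_mulye ?lte_fin ?invr_gt0 // leey.
Qed.

Hypothesis hconn : hconnected E.

(* Summing the edge bounds along a geodesic: eventually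
   KD_l(x,y) <= d(x,y) (1 - b l). *)
Lemma KD_geodesic_bound {a b : R} : (b < a)%R ->
  (forall x y : V, hadj E x y -> x != y -> a%:E <= kappa_low E w x y) ->
  forall x y, \forall l \near (0:R)^'+,
    KD E w l x y <= ((hdist E x y)%:R * (1 - b * l))%:E.
Proof.
move=> ba hyp x y.
suff geo n : forall x y, hdist E x y = n -> \forall l \near (0:R)^'+,
    KD E w l x y <= (n%:R * (1 - b * l))%:E by exact: geo.
elim: n => [|n IH] {}x {}y.
  move/(hdist_eq0 hconn) => ->; apply: nearW => l.
  by rewrite mul0r; apply: KD_diag.
case/(hdist_step hconn) => z [axz xz d1 d2].
have edge := KD_edge_bound ba d1 (hyp x z axz xz).
apply: filterS (filterI edge (IH _ _ d2)) => l [e1 e2].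
apply: le_trans (KD_triangle l x y z) _.
apply: le_trans (leeD e1 e2) _.
by rewrite -EFinD lee_fin -natr1 mulrDl mul1r addrC.
Qed.

Lemma kappa_low_bound_propagates (a : R) :
  (forall x y : V, hadj E x y -> x != y -> a%:E <= kappa_low E w x y) ->
  forall x y : V, x != y -> a%:E <= kappa_low E w x y.
Proof.
move=> hyp x y xy; apply/lee_subgt0Pr => e e0.
have ba : (a - e < a)%R by rewrite ltrBlDr ltrDl.
apply: le_limf_einf.
apply: filterS (filterI (KD_geodesic_bound ba hyp x y) (nbhs_right_gt 0)).
move=> l [hKD l0]; rewrite -EFinB.
exact: kappa_ratio_bound l0 (hdist_gt0 hconn xy) hKD.
Qed.

Lemma kappa_low_inf_adjacent :
  ereal_inf [set kappa_low E w p.1 p.2 | p in [set q : V * V | hadj E q.1 q.2 /\ q.1 != q.2]]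
    = ereal_inf [set kappa_low E w p.1 p.2 | p in [set q : V * V | q.1 != q.2]].
Proof.
apply/eqP; rewrite eq_le; apply/andP; split.
- apply: le_ereal_inf_tmp => _ [[x y] /= xy <-].
  apply: le_ereal_real_lbounds => a ha.
  apply: (kappa_low_bound_propagates a) xy => u v huv uv.
  apply: le_trans ha _.
  by apply: ereal_inf_lbound; exists (u, v).
- by apply: ereal_inf_le_tmp => _ [p hp <-]; exists p => //; case: hp.
Qed.

End CurvatureBounds.

Theorem mainTheorem11 (R : realType) (V : finType) (E : {set {set V}})
  (w : {set V} -> R)
  (hEne : forall e, e \in E -> (0 < #|e|)%N)
  (hw : forall e, e \in E -> 0 < w e)
  (hconn : hconnected E)
  (hdeg_pos : forall x, 0 < hdeg E w x)
  (hV : (2 <= #|V|)%N) :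
  (forall a : R,
     (forall x y : V, hadj E x y -> x != y -> (a%:E <= kappa_low E w x y)%E) ->
     (forall x y : V, x != y -> (a%:E <= kappa_low E w x y)%E))
  /\
  ereal_inf [set kappa_low E w p.1 p.2 | p in [set q : V * V | hadj E q.1 q.2 /\ q.1 != q.2]]
    = ereal_inf [set kappa_low E w p.1 p.2 | p in [set q : V * V | q.1 != q.2]].
Proof.
split; first exact: kappa_low_bound_propagates.
exact: kappa_low_inf_adjacent.
Qed.
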